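(* The Sorgenfrey line $\mathbb S$ is homeomorphic to $\langle{}^\omega\omega,\sigma_{\mathbb S}\rangle$.
   Context: $\mathbb S$ is $\mathbb R$ with the topology generated by $\{[a,b):a,b\in\mathbb R\}$. ${}^\omega\omega$ is the set of infinite sequences of naturals; for $a,b\in{}^\omega\omega$, $a\triangleleft b$ iff there is $n$ with $a\upharpoonright n=b\upharpoonright n$ and $a(n)<b(n)$. $\sigma_{\mathbb S}$ is the topology on ${}^\omega\omega$ with base consisting of the sets $B(p,m)=\{p\}\cup\{r\in{}^\omega\omega: r\upharpoonright m=p\upharpoonright m,\ p\triangleleft r\}$, $p\in{}^\omega\omega$, $m\in\omega$. *)

From Stdlib Require Import Reals Lra Lia.
Open Scope R_scope.

Definition open_from_base {X I : Type} (Bas : I -> X -> Prop) (U : X -> Prop) : Prop :=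
  forall x, U x -> exists i, Bas i x /\ (forall y, Bas i y -> U y).

Definition homeomorphic {X Y : Type} (openX : (X -> Prop) -> Prop)
    (openY : (Y -> Prop) -> Prop) : Prop :=
  exists (f : X -> Y) (g : Y -> X),
    (forall x, g (f x) = x) /\ (forall y, f (g y) = y) /\
    (forall V, openY V -> openX (fun x => V (f x))) /\
    (forall U, openX U -> openY (fun y => U (g y))).

Definition sorg_base (ab : R * R) (x : R) : Prop := fst ab <= x < snd ab.
Definition sorgenfrey_open (U : R -> Prop) : Prop := open_from_base sorg_base U.

Definition baire := nat -> nat.

Definition tri (a b : baire) : Prop :=
  exists n, (forall i, (i < n)%nat -> a i = b i) /\ (a n < b n)%nat.

Definition sigmaS_base (pm : baire * nat) (r : baire) : Prop :=
  let (p, m) := pm in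
  r = p \/ ((forall i, (i < m)%nat -> r i = p i) /\ tri p r).

Definition sigmaS_open (U : baire -> Prop) : Prop := open_from_base sigmaS_base U.

From Stdlib Require Import Reals.
From Stdlib Require Import Lra Lia ZArith Arith Classical ClassicalEpsilon FunctionalExtensionality.
Open Scope R_scope.

(* Every real x gets an "address" code x : nat -> nat.  Its first
   entry encodes the integer part of x, which selects the cell [n, n+1).  A cell
   [a, a+L) is cut into the infinitely many consecutive subcells
     [a + L(1 - 2^-d), a + L(1 - 2^-(d+1))),   d = 0, 1, 2, ...,
   and the next entry of the address is the index d of the subcell containing x.
   Cells of depth k have width at most 2^-k, and the cell of depth k determined
   by a sequence p (cell p k) depends only on p 0, ..., p k. *)

Definition half_pow (n : nat) : R := (/2) ^ n.

Lemma half_pow_pos n : 0 < half_pow n.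
Proof. unfold half_pow; apply pow_lt; lra. Qed.

Lemma half_pow_S n : half_pow (S n) = half_pow n / 2.
Proof. unfold half_pow; simpl; lra. Qed.

Lemma half_pow_antitone n m : (n <= m)%nat -> half_pow m <= half_pow n.
Proof.
  induction 1; [lra|].
  rewrite half_pow_S; pose proof (half_pow_pos m); lra.
Qed.

Lemma half_pow_le_1 n : half_pow n <= 1.
Proof. apply (half_pow_antitone 0); lia. Qed.

Lemma half_pow_small e : 0 < e -> exists n, half_pow n < e.
Proof.
  intros He.
  destruct (pow_lt_1_zero (/2)) with (y := e) as [N HN]; auto.
  { rewrite Rabs_right; lra. }
  exists N; specialize (HN N (le_n _)).
  pose proof (half_pow_pos N); unfold half_pow in *.
  rewrite Rabs_right in HN; lra.
Qed.

Definition digit_interval (d : nat) (w : R) : Prop :=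
  1 - half_pow d <= w < 1 - half_pow (S d).

Definition digit (w : R) : nat := epsilon (inhabits 0%nat) (fun d => digit_interval d w).

Lemma digit_exists w : 0 <= w < 1 -> exists d, digit_interval d w.
Proof.
  intros Hw; destruct (half_pow_small (1 - w)) as [n Hn]; [lra|].
  induction n as [|n IH].
  - unfold half_pow in Hn; simpl in Hn; lra.
  - destruct (Rlt_or_le (half_pow n) (1 - w)) as [Hlt|Hle]; auto.
    exists n; unfold digit_interval; lra.
Qed.

Lemma digit_spec w : 0 <= w < 1 -> digit_interval (digit w) w.
Proof. intros Hw; unfold digit; apply epsilon_spec, digit_exists, Hw. Qed.

Lemma digit_interval_unique d d' w :
  digit_interval d w -> digit_interval d' w -> d = d'.
Proof.
  unfold digit_interval; intros H H'.
  destruct (Nat.lt_total d d') as [Hlt|[Heq|Hlt]]; auto.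
  - pose proof (half_pow_antitone (S d) d' Hlt); lra.
  - pose proof (half_pow_antitone (S d') d Hlt); lra.
Qed.

Lemma digit_unique d w : digit_interval d w -> digit w = d.
Proof.
  intros H; apply (digit_interval_unique _ _ w); auto.
  apply digit_spec; unfold digit_interval in H.
  pose proof (half_pow_le_1 d); pose proof (half_pow_pos (S d)); lra.
Qed.

Lemma digit_monotone w w' : 0 <= w < 1 -> 0 <= w' < 1 -> w <= w' ->
  (digit w <= digit w')%nat.
Proof.
  intros Hw Hw' Hle.
  pose proof (digit_spec w Hw) as D; pose proof (digit_spec w' Hw') as D'.
  unfold digit_interval in *.
  destruct (Nat.le_gt_cases (digit w) (digit w')) as [|Hlt]; auto.
  pose proof (half_pow_antitone (S (digit w')) (digit w) Hlt); lra.
Qed.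

Definition int_code (z : Z) : nat :=
  if (0 <=? z)%Z then Z.to_nat (2 * z) else Z.to_nat (-2 * z - 1).

Definition int_decode (n : nat) : Z :=
  if (n mod 2 =? 0)%nat then Z.of_nat (n / 2) else (- Z.of_nat (n / 2 + 1))%Z.

Lemma int_code_inj a b : int_code a = int_code b -> a = b.
Proof. unfold int_code; destruct (Z.leb_spec 0 a), (Z.leb_spec 0 b); lia. Qed.

Lemma int_code_decode n : int_code (int_decode n) = n.
Proof.
  pose proof (Nat.div_mod_eq n 2); pose proof (Nat.mod_upper_bound n 2).
  unfold int_decode, int_code.
  destruct (Nat.eqb_spec (n mod 2) 0);
    destruct (Z.leb_spec 0 (Z.of_nat (n / 2))); try lia;
    destruct (Z.leb_spec 0 (- Z.of_nat (n / 2 + 1))); lia.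
Qed.

Lemma int_decode_code z : int_decode (int_code z) = z.
Proof. apply int_code_inj, int_code_decode. Qed.

Definition cell_end (c : R * R) : R := fst c + snd c.

Definition in_cell (c : R * R) (x : R) : Prop := fst c <= x < cell_end c.

Definition subcell (c : R * R) (d : nat) : R * R :=
  (fst c + snd c * (1 - half_pow d), snd c * half_pow (S d)).

Definition digit_in (c : R * R) (x : R) : nat := digit ((x - fst c) / snd c).

Lemma rescale_bounds c u v x : 0 < snd c ->
  (fst c + snd c * u <= x < fst c + snd c * v <-> u <= (x - fst c) / snd c < v).
Proof.
  destruct c as [a L]; simpl; intros HL.
  set (w := (x - a) / L).
  assert (Hx : x = a + L * w) by (unfold w; field; lra).
  rewrite Hx; split; intros [H1 H2]; split; nra.
Qed.

Lemma in_cell_rescale c x : 0 < snd c ->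
  (in_cell c x <-> 0 <= (x - fst c) / snd c < 1).
Proof.
  intros HL; rewrite <- rescale_bounds by exact HL.
  unfold in_cell, cell_end; rewrite Rmult_0_r, Rmult_1_r, Rplus_0_r; tauto.
Qed.

Lemma subcell_end c d : cell_end (subcell c d) = fst c + snd c * (1 - half_pow (S d)).
Proof. unfold cell_end, subcell; simpl; rewrite (half_pow_S d); field. Qed.

Lemma in_subcell_iff c d x : 0 < snd c ->
  (in_cell (subcell c d) x <-> digit_interval d ((x - fst c) / snd c)).
Proof.
  intros HL; unfold digit_interval; rewrite <- rescale_bounds by exact HL.
  unfold in_cell; rewrite subcell_end; simpl; tauto.
Qed.

Lemma in_subcell_digit_in c x : 0 < snd c -> in_cell c x ->
  in_cell (subcell c (digit_in c x)) x.
Proof.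
  intros HL Hx; apply in_subcell_iff; auto.
  apply digit_spec, in_cell_rescale; auto.
Qed.

Lemma digit_in_subcell c d x : 0 < snd c -> in_cell (subcell c d) x ->
  digit_in c x = d.
Proof. intros HL Hx; apply digit_unique, in_subcell_iff; auto. Qed.

Lemma subcell_inside c d : 0 < snd c ->
  fst c <= fst (subcell c d) /\ cell_end (subcell c d) < cell_end c /\
  0 < snd (subcell c d) <= snd c / 2.
Proof.
  intros HL; rewrite subcell_end; unfold cell_end, subcell; simpl.
  pose proof (half_pow_le_1 d); pose proof (half_pow_pos (S d)).
  pose proof (half_pow_S d).
  repeat split; nra.
Qed.

Fixpoint cell (p : baire) (k : nat) : R * R :=
  match k with
  | O => (IZR (int_decode (p O)), 1)
  | S k => subcell (cell p k) (p (S k))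
  end.

Lemma cell_width p k : 0 < snd (cell p k) <= half_pow k.
Proof.
  induction k as [|k IH].
  - unfold half_pow; simpl; lra.
  - cbn [cell]; pose proof (subcell_inside (cell p k) (p (S k)) (proj1 IH)).
    rewrite half_pow_S; lra.
Qed.

Lemma cell_monotone p k j : (k <= j)%nat ->
  fst (cell p k) <= fst (cell p j) /\ cell_end (cell p j) <= cell_end (cell p k).
Proof.
  induction 1 as [|j _ IH]; [lra|].
  pose proof (subcell_inside (cell p j) (p (S j)) (proj1 (cell_width p j))).
  cbn [cell]; lra.
Qed.

Lemma cell_fst_lt_end p k j : fst (cell p k) < cell_end (cell p j).
Proof.
  pose proof (proj1 (cell_width p k)); pose proof (proj1 (cell_width p j)).
  unfold cell_end in *.
  destruct (Nat.le_gt_cases k j) as [Hkj|Hjk].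
  - pose proof (cell_monotone p k j Hkj); unfold cell_end in *; lra.
  - pose proof (cell_monotone p j k (Nat.lt_le_incl _ _ Hjk)); unfold cell_end in *; lra.
Qed.

Lemma cell_agree p q m : (forall i, (i <= m)%nat -> p i = q i) -> cell p m = cell q m.
Proof.
  induction m as [|m IH]; intros H; simpl.
  - rewrite (H 0%nat); auto.
  - rewrite IH, (H (S m)); auto.
Qed.

Fixpoint code_cell (x : R) (k : nat) : R * R :=
  match k with
  | O => (IZR (Int_part x), 1)
  | S k => subcell (code_cell x k) (digit_in (code_cell x k) x)
  end.

Definition code (x : R) : baire := fun n =>
  match n with
  | O => int_code (Int_part x)
  | S k => digit_in (code_cell x k) x
  end.

Lemma code_cell_eq x k : code_cell x k = cell (code x) k.
Proof.
  induction k as [|k IH]; simpl.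
  - rewrite int_decode_code; reflexivity.
  - rewrite IH; reflexivity.
Qed.

Lemma code_S x k : code x (S k) = digit_in (cell (code x) k) x.
Proof. simpl; rewrite code_cell_eq; reflexivity. Qed.

Lemma Int_part_unique x z : IZR z <= x < IZR z + 1 -> Int_part x = z.
Proof. intros H; symmetry; apply Int_part_spec; lra. Qed.

Lemma code_in_cell x k : in_cell (cell (code x) k) x.
Proof.
  induction k as [|k IH].
  - unfold in_cell, cell_end; simpl; rewrite int_decode_code.
    pose proof (base_Int_part x); lra.
  - cbn [cell]; rewrite code_S.
    apply in_subcell_digit_in; auto; apply cell_width.
Qed.

Lemma code_from_cells p x n : (forall i, (i <= n)%nat -> in_cell (cell p i) x) ->
  forall i, (i <= n)%nat -> code x i = p i.
Proof.
  induction n as [|n IH]; intros Hin i Hi.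
  - assert (i = 0%nat) by lia; subst i.
    specialize (Hin 0%nat (le_n _)); unfold in_cell, cell_end in Hin; simpl in Hin.
    simpl; rewrite (Int_part_unique x (int_decode (p 0%nat))) by lra.
    apply int_code_decode.
  - destruct (Nat.le_gt_cases i n) as [Hle|Hgt]; [apply IH; auto|].
    assert (i = S n) by lia; subst i.
    rewrite code_S, (cell_agree (code x) p n) by (apply IH; auto).
    apply digit_in_subcell; [apply cell_width|apply (Hin (S n)); lia].
Qed.

Lemma code_agree_close x y m : (forall i, (i <= m)%nat -> code y i = code x i) ->
  Rabs (y - x) < half_pow m.
Proof.
  intros H; pose proof (cell_agree _ _ m H) as E.
  pose proof (code_in_cell x m) as Hx; pose proof (code_in_cell y m) as Hy.
  pose proof (cell_width (code x) m).
  rewrite E in Hy; unfold in_cell, cell_end in *.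
  apply Rabs_def1; lra.
Qed.

Lemma code_inj x y : code x = code y -> x = y.
Proof.
  intros E; apply NNPP; intros Hne.
  assert (Hpos : 0 < Rabs (y - x)) by (apply Rabs_pos_lt; lra).
  destruct (half_pow_small _ Hpos) as [m Hm].
  assert (Rabs (y - x) < half_pow m) by (apply code_agree_close; intros; rewrite E; auto).
  lra.
Qed.

(* Every address is realized: by completeness the nested cells of p meet. *)
Lemma code_surj p : exists x, code x = p.
Proof.
  set (E := fun r => exists k, r = fst (cell p k)).
  destruct (completeness E) as [x [Hub Hlub]].
  - exists (cell_end (cell p 0)); intros r [k ->]; left; apply cell_fst_lt_end.
  - exists (fst (cell p 0)), 0%nat; reflexivity.
  - assert (Hin : forall k, in_cell (cell p k) x).
    { intros k; split; [apply Hub; exists k; reflexivity|].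
      apply Rle_lt_trans with (cell_end (cell p (S k))).
      + apply Hlub; intros r [j ->]; left; apply cell_fst_lt_end.
      + apply (subcell_inside (cell p k) (p (S k))), cell_width. }
    exists x; apply functional_extensionality; intros n.
    apply (code_from_cells p x n); auto.
Qed.

Lemma code_right_nbhd x y m : x <= y < cell_end (cell (code x) m) ->
  forall i, (i <= m)%nat -> code y i = code x i.
Proof.
  intros Hy; apply code_from_cells; intros i Hi.
  pose proof (cell_monotone (code x) i m Hi); pose proof (code_in_cell x m).
  unfold in_cell in *; lra.
Qed.

Lemma tri_trans a b c : tri a b -> tri b c -> tri a c.
Proof.
  intros [n1 [H1 L1]] [n2 [H2 L2]].
  destruct (Nat.lt_total n1 n2) as [Hlt|[Heq|Hlt]].
  - exists n1; split; [intros i Hi; rewrite H1, H2 by lia; auto|].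
    rewrite <- (H2 n1 Hlt); auto.
  - subst n2; exists n1; split; [intros i Hi; rewrite H1, H2 by lia; auto|lia].
  - exists n2; split; [intros i Hi; rewrite H1, H2 by lia; auto|].
    rewrite (H1 n2 Hlt); auto.
Qed.

Lemma tri_irrefl a : ~ tri a a.
Proof. intros [n [_ H]]; lia. Qed.

Lemma first_difference (a b : baire) : a <> b ->
  exists n, (forall i, (i < n)%nat -> a i = b i) /\ a n <> b n.
Proof.
  intros Hne.
  assert (Hex : exists n, a n <> b n).
  { apply NNPP; intros Hno; apply Hne, functional_extensionality; intros n.
    apply NNPP; intros Hn; apply Hno; eauto. }
  destruct (dec_inh_nat_subset_has_unique_least_element (fun n => a n <> b n))
    as [n [[Hn Hleast] _]]; [intros n; apply classic|exact Hex|].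
  exists n; split; auto.
  intros i Hi; apply NNPP; intros C; specialize (Hleast i C); lia.
Qed.

Lemma code_monotone x y : x < y -> code x 0%nat = code y 0%nat -> tri (code x) (code y).
Proof.
  intros Hxy H0.
  destruct (first_difference (code x) (code y)) as [n [Hagree Hn]].
  { intros E; apply code_inj in E; lra. }
  exists n; split; auto.
  destruct n as [|k]; [contradiction|].
  assert (Ecell : cell (code y) k = cell (code x) k).
  { apply cell_agree; intros i Hi; symmetry; apply Hagree; lia. }
  pose proof (code_in_cell x k) as Hx; pose proof (code_in_cell y k) as Hy.
  rewrite !code_S, Ecell in *.
  set (c := cell (code x) k) in *.
  assert (Hc : 0 < snd c) by apply cell_width.
  assert (digit_in c x <= digit_in c y)%nat.
  { apply digit_monotone; try apply in_cell_rescale; auto.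
    unfold Rdiv; apply Rmult_le_compat_r; [left; apply Rinv_0_lt_compat|]; lra. }
  lia.
Qed.

Lemma code_reflects_order x y : code x 0%nat = code y 0%nat -> tri (code x) (code y) -> x < y.
Proof.
  intros H0 Htri.
  destruct (total_order_T x y) as [[Hlt|Heq]|Hgt]; auto; exfalso.
  - subst y; exact (tri_irrefl _ Htri).
  - apply (tri_irrefl (code x)), (tri_trans _ (code y)); auto.
    apply code_monotone; auto.
Qed.

Lemma sigmaS_base_upward p m q r : sigmaS_base (p, m) q ->
  (forall i, (i < m)%nat -> r i = q i) -> r = q \/ tri q r -> sigmaS_base (p, m) r.
Proof.
  simpl; intros Hq Hagree Hqr.
  destruct Hq as [->|[Hqp Hpq]].
  - destruct Hqr as [->|Htri]; [left|right]; auto.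
  - right; destruct Hqr as [->|Htri]; split; auto.
    + intros i Hi; rewrite Hagree, Hqp; auto.
    + apply (tri_trans _ q); auto.
Qed.

Definition decode (p : baire) : R := epsilon (inhabits 0) (fun x => code x = p).

Lemma code_decode p : code (decode p) = p.
Proof. unfold decode; apply epsilon_spec, code_surj. Qed.

Lemma decode_code x : decode (code x) = x.
Proof. apply code_inj, code_decode. Qed.

(* Continuity of code: if code x ∈ B(p,m), then code maps the Sorgenfrey
   neighbourhood [x, end of the depth-m cell of x) into B(p,m). *)
Lemma code_continuous V : sigmaS_open V -> sorgenfrey_open (fun x => V (code x)).
Proof.
  intros HV x Vx.
  destruct (HV _ Vx) as [[p m] [Hbase Hsub]].
  exists (x, cell_end (cell (code x) m)); split.
  - pose proof (code_in_cell x m); unfold in_cell, sorg_base in *; simpl; lra.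
  - unfold sorg_base; simpl; intros y Hy.
    pose proof (code_right_nbhd x y m Hy) as Hagree.
    apply Hsub, (sigmaS_base_upward p m (code x)); auto.
    + intros i Hi; apply Hagree; lia.
    + destruct (Rle_lt_or_eq_dec x y) as [Hlt|Heq]; [lra| |subst; auto].
      right; apply code_monotone; auto; symmetry; apply Hagree; lia.
Qed.

(* Continuity of decode: if decode p ∈ [a,b) and 2^-m < b - decode p, then
   decode maps B(p, m+1) into [decode p, decode p + 2^-m) ⊆ [a,b). *)
Lemma decode_continuous U : sorgenfrey_open U -> sigmaS_open (fun p => U (decode p)).
Proof.
  intros HU p Up.
  destruct (HU _ Up) as [[a b] [Hbase Hsub]]; unfold sorg_base in *; simpl in Hbase.
  destruct (half_pow_small (b - decode p)) as [m Hm]; [lra|].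
  exists (p, S m); split; [left; reflexivity|].
  intros r [->|[Hagree Htri]]; [exact Up|].
  apply Hsub; simpl.
  rewrite <- (code_decode p), <- (code_decode r) in Hagree, Htri.
  assert (Hlt : decode p < decode r).
  { apply code_reflects_order; auto; symmetry; apply Hagree; lia. }
  assert (Hclose : Rabs (decode r - decode p) < half_pow m).
  { apply code_agree_close; intros i Hi; apply Hagree; lia. }
  rewrite Rabs_right in Hclose by lra; lra.
Qed.

Theorem mainTheorem9 : @homeomorphic R baire sorgenfrey_open sigmaS_open.
Proof.
  exists code, decode.
  split; [exact decode_code|].
  split; [exact code_decode|].
  split; [exact code_continuous|exact decode_continuous].
Qed.
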